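(* Let $\mathbf D_0\in\mathbb R^{m\times p}$ have unit-norm columns, $\mathbf W\in\mathcal W_{\mathbf D_0}$, $\mathbf v\in\mathcal S^p$, and write $\mathbf D(t')=\mathbf D(\mathbf W,\mathbf v,t')$. Let $\mathbf x\in\mathbb R^m$, and $\boldsymbol\alpha_0\in\mathbb R^p$ with support $J$, $|J|=k$. Assume $k\mu(t)\le1/2$, $0\le t'\le t$, $\frac94\lambda\le\underline\alpha\le\min_{j\in J}|[\boldsymbol\alpha_0]_j|$ with $\lambda>0$, and $$\|[\mathbf D(t')]_J^\top(\mathbf x-\mathbf D(t')\boldsymbol\alpha_0)\|_\infty<\lambda(2-Q_t^2),\qquad\|[\mathbf D(t')]_{J^c}^\top(\mathbf I-\mathbf P_J(t'))\mathbf x\|_\infty<\lambda(2-Q_t^2).$$ Then the vector $\hat{\boldsymbol\alpha}(t')$ given by $\hat{\boldsymbol\alpha}(t')_J=([\mathbf D(t')]_J^\top[\mathbf D(t')]_J)^{-1}([\mathbf D(t')]_J^\top\mathbf x-\lambda\,\mathrm{sign}([\boldsymbol\alpha_0]_J))$, $\hat{\boldsymbol\alpha}(t')_{J^c}=\mathbf 0$, is the unique solution of $\min_{\boldsymbol\alpha\in\mathbb R^p}\frac12\|\mathbf x-\mathbf D(t')\boldsymbol\alpha\|_2^2+\lambda\|\boldsymbol\alpha\|_1$.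
   Context: $\mu_0=\max_{i\ne j}|[\mathbf d_0^i]^\top\mathbf d_0^j|$, $\mu(t)=\mu_0+3t$, $Q_t=1/\sqrt{1-k\mu(t)}$. $\mathcal S^p$ unit sphere; $\mathcal W_{\mathbf D_0}=\{\mathbf W:\mathrm{diag}(\mathbf W^\top\mathbf D_0)=\mathbf 0,\mathrm{diag}(\mathbf W^\top\mathbf W)=\mathbf 1\}$; $\mathbf D(\mathbf W,\mathbf v,t)=\mathbf D_0\mathrm{Diag}[\cos(\mathbf vt)]+\mathbf W\mathrm{Diag}[\sin(\mathbf vt)]$. $\mathbf M_J$ denotes the columns indexed by $J$; $\mathbf P_J(t')$ is the orthogonal projector onto the span of $[\mathbf D(t')]_J$. *)

From HB Require Import structures.
From mathcomp Require Import all_boot all_order all_algebra.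
From mathcomp Require Import reals trigo.
Set Implicit Arguments. Unset Strict Implicit. Unset Printing Implicit Defensive.
Import Order.TTheory GRing.Theory Num.Theory.
Local Open Scope ring_scope.

Section Defs.
Variable R : realType.

Definition dotc n (u w : 'cV[R]_n) : R := \sum_i u i 0 * w i 0.
Definition sqnorm2 n (u : 'cV[R]_n) : R := \sum_i u i 0 ^+ 2.
Definition norm1 n (u : 'cV[R]_n) : R := \sum_i `|u i 0|.

Definition unit_cols m p (D : 'M[R]_(m, p)) : Prop :=
  forall j : 'I_p, sqnorm2 (col j D) = 1.

Definition in_W m p (D0 W : 'M[R]_(m, p)) : Prop :=
  (forall j : 'I_p, dotc (col j W) (col j D0) = 0) /\
  (forall j : 'I_p, dotc (col j W) (col j W) = 1).

Definition on_sphere p (v : 'cV[R]_p) : Prop := sqnorm2 v = 1.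

Definition Dcurve m p (D0 W : 'M[R]_(m, p)) (v : 'cV[R]_p) (t : R) : 'M[R]_(m, p) :=
  \matrix_(i, j) (D0 i j * cos (v j 0 * t) + W i j * sin (v j 0 * t)).

(* mutual coherence mu_0 = max_{i <> j} |d_i^T d_j|  (0 if p <= 1) *)
Definition mu0 m p (D0 : 'M[R]_(m, p)) : R :=
  \big[Num.max/0]_(i < p) \big[Num.max/0]_(j < p | i != j)
     `|dotc (col i D0) (col j D0)|.

Definition mu m p (D0 : 'M[R]_(m, p)) (t : R) : R := mu0 D0 + 3 * t.

Definition Qt m p (D0 : 'M[R]_(m, p)) (k : nat) (t : R) : R :=
  1 / Num.sqrt (1 - k%:R * mu D0 t).

(* selection matrix: S_J e_i = e_{enum_val i}, so  M_J = M *m S_J *)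
Definition selJ p (J : {set 'I_p}) : 'M[R]_(p, #|J|) :=
  \matrix_(j, i) ((j == enum_val i)%:R).

Definition colsJ m p (J : {set 'I_p}) (M : 'M[R]_(m, p)) : 'M[R]_(m, #|J|) :=
  M *m selJ J.

Definition projJ m p (J : {set 'I_p}) (M : 'M[R]_(m, p)) : 'M[R]_m :=
  colsJ J M *m invmx ((colsJ J M)^T *m colsJ J M) *m (colsJ J M)^T.

Definition alpha_hat m p (J : {set 'I_p}) (M : 'M[R]_(m, p)) (x : 'cV[R]_m)
  (lam : R) (a0 : 'cV[R]_p) : 'cV[R]_p :=
  selJ J *m (invmx ((colsJ J M)^T *m colsJ J M) *m
     ((colsJ J M)^T *m x - lam *: map_mx Num.sg ((selJ J)^T *m a0))).

Definition lasso_obj m p (M : 'M[R]_(m, p)) (x : 'cV[R]_m) (lam : R)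
  (a : 'cV[R]_p) : R :=
  2^-1 * sqnorm2 (x - M *m a) + lam * norm1 a.

Definition unique_minimizer p (f : 'cV[R]_p -> R) (a : 'cV[R]_p) : Prop :=
  (forall b, f a <= f b) /\ (forall b, f b <= f a -> b = a).

End Defs.

From HB Require Import structures.
From mathcomp Require Import all_boot all_order all_algebra.
From mathcomp Require Import reals trigo.
From mathcomp Require Import topology normedtype derive realfun.
From mathcomp Require Import ring lra.
Import Order.TTheory GRing.Theory Num.Theory.
Import numFieldNormedType.Exports.
Local Open Scope ring_scope.
Set Implicit Arguments. Unset Strict Implicit. Unset Printing Implicit Defensive.

(* On its support J the Lasso stationarity condition is the linear system
   defining alpha_hat, so alpha_hat is the unique minimiser as soon as it has
   the signs of alpha_0 on J, every column off J correlates with its residual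
   by strictly less than lambda, and D_J is injective.  All three follow from
   the Gram matrix G = D_J^T D_J having unit diagonal and off-diagonal entries
   at most the coherence mu, whence (1 - k mu) |y|_oo <= |G y|_oo.  With
   Q^2 = 1 / (1 - k mu) this gives
   |alpha_hat_J - alpha_0,J|_oo < lambda Q^2 (3 - Q^2) <= 9/4 lambda,
   and off J a correlation below lambda (2 - Q^2) + lambda k mu Q^2 = lambda.
   Along the curve the columns of D(t') stay unit vectors, and since
   |sin (v_j t')| <= t' each of the three cross terms involving W adds at most
   t' to the coherence, so mu(D(t')) <= mu_0 + 3 t' <= mu(t). *)

Lemma sumr_indicator (R : pzSemiRingType) (T : finType) (e : T) (F : T -> R) :
  \sum_j (j == e)%:R * F j = F e.
Proof.
rewrite (bigD1 e) //= eqxx mul1r big1 ?addr0 // => j /negbTE ->.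
by rewrite mul0r.
Qed.

Lemma sgr_mul_eq_norm (R : realDomainType) (a y : R) :
  `|y - a| < `|a| -> Num.sg a * y = `|y|.
Proof.
case: (ltrgt0P a) => [a_gt0|a_lt0|_]; last by rewrite ltNge normr_ge0.
- by rewrite gtr0_sg // mul1r ltr_norml => /andP[? ?]; rewrite gtr0_norm //; lra.
- by rewrite ltr0_sg // mulN1r ltr_norml => /andP[? ?]; rewrite ltr0_norm //; lra.
Qed.

Lemma sgr_le1 (R : realDomainType) (a : R) : `|Num.sg a| <= 1.
Proof. by rewrite normr_sg; case: (a != 0). Qed.

Lemma ler_mul3B (R : realFieldType) (q l : R) : 0 <= l -> q * (l * (3 - q)) <= 9 / 4 * l.
Proof.
move=> l_ge0; rewrite -subr_ge0.
have -> : 9 / 4 * l - q * (l * (3 - q)) = l * (q - 3 / 2) ^+ 2 by field.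
by rewrite mulr_ge0 ?sqr_ge0.
Qed.

Lemma normrM3_le (R : realDomainType) (a b c A B C : R) :
  `|a| <= A -> `|b| <= B -> `|c| <= C -> `|a * b * c| <= A * B * C.
Proof.
move=> aA bB cC; rewrite !normrM.
by apply: ler_pM; rewrite ?mulr_ge0 //; apply: ler_pM.
Qed.

Lemma abs_sin_le (R : realType) (x : R) : `|sin x| <= `|x|.
Proof.
wlog x_ge0 : x / 0 <= x.
  move=> le_sin; case: (leP 0 x) => [|/ltW]; first exact: le_sin.
  by rewrite -oppr_ge0 => /le_sin; rewrite sinN !normrN.
have [c _ mvt] : exists2 c, c \in `[0, x]%R & sin x - sin 0 = cos c * (x - 0).
  apply: MVT_segment x_ge0 (fun y _ => is_derive_sin y) _.
  by apply/continuous_subspaceT => ?; exact: continuous_sin.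
move: mvt; rewrite sin0 !subr0 => ->.
by rewrite normrM -[X in _ <= X]mul1r ler_wpM2r // cos_max.
Qed.

Section DiagonallyDominant.
Variables (R : realFieldType) (n : nat) (G : 'M[R]_n) (mu : R).
Hypotheses (G_diag : forall i, G i i = 1)
  (G_offdiag : forall i j, i != j -> `|G i j| <= mu) (mu_ge0 : 0 <= mu).

(* Look at an index where [|y i|] is maximal: there the diagonal term dominates. *)
Lemma diag_dominant_mul_ge (y : 'cV[R]_n) : n%:R * mu <= 1 ->
  forall i, exists i0, (1 - n%:R * mu) * `|y i 0| <= `|(G *m y) i0 0|.
Proof.
move=> nmu i.
have [i0 _ y_max] := @arg_maxP _ _ _ i xpredT (fun j => `|y j 0|) erefl.
exists i0; set M := `|y i0 0| in y_max *.
have off_le : `|\sum_(j | j != i0) G i0 j * y j 0| <= n%:R * mu * M.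
  apply: le_trans (ler_norm_sum _ _ _) _.
  apply: (@le_trans _ _ (\sum_(j | j != i0) mu * M)).
    apply: ler_sum => j ji0; rewrite normrM; apply: ler_pM => //; last exact: y_max.
    by apply: G_offdiag; rewrite eq_sym.
  apply: (@le_trans _ _ (\sum_(j < n) mu * M)).
    rewrite [X in _ <= X](bigD1 i0) //= lerDr.
    by apply: mulr_ge0; rewrite // normr_ge0.
  by rewrite sumr_const card_ord -mulrA mulr_natl.
apply: (@le_trans _ _ ((1 - n%:R * mu) * M)).
  by apply: ler_wpM2l; [rewrite subr_ge0 | exact: y_max].
rewrite mxE (bigD1 i0) //= G_diag mul1r mulrBl mul1r.
apply: le_trans (lerB_normD _ _); exact: lerB.
Qed.

Lemma diag_dominant_ler (y : 'cV[R]_n) (B : R) : n%:R * mu <= 1 ->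
  (forall i, `|(G *m y) i 0| <= B) -> forall i, (1 - n%:R * mu) * `|y i 0| <= B.
Proof. by move=> nmu Gy_le i; have [i0 /le_trans] := diag_dominant_mul_ge y nmu i; apply. Qed.

Lemma diag_dominant_ltr (y : 'cV[R]_n) (B : R) : n%:R * mu <= 1 ->
  (forall i, `|(G *m y) i 0| < B) -> forall i, (1 - n%:R * mu) * `|y i 0| < B.
Proof. by move=> nmu Gy_lt i; have [i0 /le_lt_trans] := diag_dominant_mul_ge y nmu i; apply. Qed.

Lemma diag_dominant_mul_eq0 (y : 'cV[R]_n) : n%:R * mu < 1 -> G *m y = 0 -> y = 0.
Proof.
move=> nmu Gy0; apply/matrixP => i c; rewrite (ord1 c) mxE.
have : (1 - n%:R * mu) * `|y i 0| <= 0.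
  by apply: diag_dominant_ler (ltW nmu) _ _ => j; rewrite Gy0 mxE normr0.
by rewrite pmulr_rle0 ?subr_gt0 // normr_le0 => /eqP.
Qed.

End DiagonallyDominant.

Lemma diag_dominant_unitmx (R : realFieldType) n (G : 'M[R]_n) (mu : R) :
  (forall i, G i i = 1) -> (forall i j, i != j -> `|G i j| <= mu) ->
  0 <= mu -> n%:R * mu < 1 -> G \in unitmx.
Proof.
move=> G_diag G_offdiag mu_ge0 nmu; rewrite -row_free_unit.
apply: inj_row_free => w wG0; apply: trmx_inj; rewrite trmx0.
apply: (diag_dominant_mul_eq0 (G := G^T) (mu := mu)) => //.
- by move=> i; rewrite mxE.
- by move=> i j ij; rewrite mxE; apply: G_offdiag; rewrite eq_sym.
- by rewrite -trmx_mul wG0 trmx0.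
Qed.

Section Vectors.
Variable R : realType.

Lemma dotcC n (u w : 'cV[R]_n) : dotc u w = dotc w u.
Proof. by rewrite /dotc; apply: eq_bigr => i _; rewrite mulrC. Qed.

Lemma dotc_col m p (D : 'M[R]_(m, p)) j (w : 'cV[R]_m) :
  dotc (col j D) w = (D^T *m w) j 0.
Proof. by rewrite /dotc !mxE; apply: eq_bigr => i _; rewrite !mxE. Qed.

Lemma dotc_mulmxr m p (D : 'M[R]_(m, p)) (r : 'cV[R]_m) (h : 'cV[R]_p) :
  dotc r (D *m h) = dotc h (D^T *m r).
Proof.
rewrite /dotc; under eq_bigr do rewrite mxE mulr_sumr.
rewrite exchange_big; apply: eq_bigr => j _; rewrite mxE mulr_sumr.
by apply: eq_bigr => i _; rewrite mxE; ring.
Qed.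

Lemma sqnorm2B n (r w : 'cV[R]_n) :
  sqnorm2 (r - w) = sqnorm2 r - 2 * dotc r w + sqnorm2 w.
Proof.
rewrite /sqnorm2 /dotc mulr_sumr -sumrB -big_split /=.
by apply: eq_bigr => i _; rewrite !mxE; ring.
Qed.

Lemma sqnorm2_ge0 n (w : 'cV[R]_n) : 0 <= sqnorm2 w.
Proof. by apply: sumr_ge0 => i _; rewrite sqr_ge0. Qed.

Lemma sqnorm2_eq0 n (w : 'cV[R]_n) : sqnorm2 w = 0 -> w = 0.
Proof.
move=> w0; apply/matrixP => i c; rewrite (ord1 c) mxE.
have /eqP := @psumr_eq0P _ _ xpredT (fun i => w i 0 ^+ 2) (fun i _ => sqr_ge0 _) w0 i isT.
by rewrite sqrf_eq0 => /eqP.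
Qed.

End Vectors.

Section Selection.
Variables (R : realType) (p : nat) (J : {set 'I_p}).
Local Notation S := (selJ R J).

Lemma selJ_trmx_mulE (w : 'cV[R]_p) i : (S^T *m w) i 0 = w (enum_val i) 0.
Proof.
rewrite mxE -(sumr_indicator (enum_val i) (fun j => w j 0)).
by apply: eq_bigr => j _; rewrite !mxE.
Qed.

Lemma selJ_mulE (z : 'cV[R]_#|J|) i : (S *m z) (enum_val i) 0 = z i 0.
Proof.
rewrite mxE -(sumr_indicator i (fun j => z j 0)).
by apply: eq_bigr => j _; rewrite !mxE (inj_eq enum_val_inj) eq_sym.
Qed.

Lemma selJ_mul_notin (z : 'cV[R]_#|J|) j : j \notin J -> (S *m z) j 0 = 0.
Proof.
move=> jJ; rewrite mxE big1 // => i _; rewrite !mxE.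
by case: eqP => [ji|]; [move: jJ; rewrite ji enum_valP | rewrite mul0r].
Qed.

Lemma selJ_mul_trmxK (w : 'cV[R]_p) :
  (forall j, j \notin J -> w j 0 = 0) -> S *m (S^T *m w) = w.
Proof.
move=> w_supp; apply/matrixP => j c; rewrite (ord1 c).
case: (boolP (j \in J)) => jJ; last by rewrite selJ_mul_notin // w_supp.
by rewrite -(enum_rankK_in jJ jJ) selJ_mulE selJ_trmx_mulE.
Qed.

Variables (m : nat) (D : 'M[R]_(m, p)).

Lemma colsJE r i : colsJ J D r i = D r (enum_val i).
Proof.
rewrite mxE -(sumr_indicator (enum_val i) (fun j => D r j)).
by apply: eq_bigr => j _; rewrite !mxE mulrC.
Qed.

Lemma colsJ_trmx_mulE (w : 'cV[R]_m) i :
  ((colsJ J D)^T *m w) i 0 = dotc (col (enum_val i) D) w.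
Proof. by rewrite trmx_mul -mulmxA selJ_trmx_mulE dotc_col. Qed.

Lemma gram_colsJE i i' :
  ((colsJ J D)^T *m colsJ J D) i i' = dotc (col (enum_val i) D) (col (enum_val i') D).
Proof. by rewrite [LHS]mxE; apply: eq_bigr => r _; rewrite [_^T i r]mxE !colsJE !mxE. Qed.

Lemma colsJ_mul_eq0 (h : 'cV[R]_p) :
  (colsJ J D)^T *m colsJ J D \in unitmx ->
  (forall j, j \notin J -> h j 0 = 0) -> D *m h = 0 -> h = 0.
Proof.
move=> G_unit h_supp Dh0.
have Gh0 : (colsJ J D)^T *m colsJ J D *m (S^T *m h) = 0.
  by rewrite -mulmxA /colsJ -(mulmxA D) selJ_mul_trmxK // Dh0 mulmx0.
by rewrite -(selJ_mul_trmxK h_supp) -(mulKmx G_unit (S^T *m h)) Gh0 !mulmx0.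
Qed.

End Selection.

Definition lasso_corr (R : realType) m p (D : 'M[R]_(m, p)) (x : 'cV[R]_m)
  (a : 'cV[R]_p) : 'cV[R]_p := D^T *m (x - D *m a).

Section LassoCertificate.
Variables (R : realType) (m p : nat) (D : 'M[R]_(m, p)) (x : 'cV[R]_m) (lam : R).
Local Notation obj := (lasso_obj D x lam).
Local Notation corr := (lasso_corr D x).

Lemma lasso_objB (a b : 'cV[R]_p) :
  obj b - obj a = 2^-1 * sqnorm2 (D *m (b - a))
    + \sum_j (lam * (`|b j 0| - `|a j 0|) - (b - a) j 0 * corr a j 0).
Proof.
rewrite /lasso_obj.
have -> : x - D *m b = (x - D *m a) - D *m (b - a).
  by rewrite mulmxBr opprB addrA subrK.
rewrite sqnorm2B dotc_mulmxr /norm1 sumrB -mulr_sumr sumrB /dotc.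
by rewrite /lasso_corr; field.
Qed.

Variables (J : {set 'I_p}) (a : 'cV[R]_p).
Hypotheses (corr_in : forall j, j \in J ->
     corr a j 0 * a j 0 = lam * `|a j 0| /\ `|corr a j 0| <= lam)
  (corr_notin : forall j, j \notin J -> a j 0 = 0 /\ `|corr a j 0| < lam)
  (gram_unit : (colsJ J D)^T *m colsJ J D \in unitmx).

Let gap (b : 'cV[R]_p) (j : 'I_p) : R :=
  lam * (`|b j 0| - `|a j 0|) - (b - a) j 0 * corr a j 0.

Let lasso_gap_ge (b : 'cV[R]_p) j :
  (lam - `|corr a j 0|) * `|b j 0| <= gap b j.
Proof.
have bc_le : b j 0 * corr a j 0 <= `|b j 0| * `|corr a j 0|.
  by rewrite -normrM ler_norm.
rewrite /gap [(b - a) j 0]mxE [(- a) j 0]mxE mulrBl [`|corr a j 0| * _]mulrC.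
case: (boolP (j \in J)) => jJ.
  by have [ca _] := corr_in jJ; rewrite mulrDl mulNr [a j 0 * _]mulrC ca; lra.
by have [-> _] := corr_notin jJ; rewrite normr0 oppr0 !addr0; lra.
Qed.

Let lasso_gap_ge0 (b : 'cV[R]_p) j : 0 <= gap b j.
Proof.
apply: le_trans (lasso_gap_ge b j); apply: mulr_ge0 => //.
rewrite subr_ge0; case: (boolP (j \in J)) => jJ.
  by case: (corr_in jJ).
by case: (corr_notin jJ) => _ /ltW.
Qed.

Lemma lasso_certificate : unique_minimizer obj a.
Proof.
have obj_ge (b : 'cV[R]_p) : obj b - obj a = 2^-1 * sqnorm2 (D *m (b - a)) + \sum_j gap b j.
  exact: lasso_objB.
have sq_ge0 (b : 'cV[R]_p) : 0 <= 2^-1 * sqnorm2 (D *m (b - a)).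
  by rewrite mulr_ge0 ?invr_ge0 ?sqnorm2_ge0.
have gap_sum_ge0 (b : 'cV[R]_p) : 0 <= \sum_j gap b j.
  by apply: sumr_ge0 => j _; exact: lasso_gap_ge0.
split=> [b|b obj_le]; first by rewrite -subr_ge0 obj_ge addr_ge0.
have := sq_ge0 b; have := gap_sum_ge0 b.
move: obj_le; rewrite -subr_le0 obj_ge => obj_le gap_ge0 sq_ge0b.
have Dh0 : D *m (b - a) = 0 by apply: sqnorm2_eq0; lra.
have gap0 : \sum_j gap b j = 0 by lra.
have h_supp j : j \notin J -> (b - a) j 0 = 0.
  move=> jJ; have [aj0 c_lt] := corr_notin jJ.
  have : (lam - `|corr a j 0|) * `|b j 0| <= 0.
    rewrite -(@psumr_eq0P _ _ xpredT (gap b) (fun j _ => lasso_gap_ge0 b j) gap0 j isT).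
    exact: lasso_gap_ge.
  rewrite pmulr_rle0 ?subr_gt0 // normr_le0 => /eqP bj0.
  by rewrite !mxE aj0 bj0 subrr.
by apply/subr0_eq/(colsJ_mul_eq0 gram_unit).
Qed.

End LassoCertificate.

Section AlphaHat.
Variables (R : realType) (m p : nat) (D : 'M[R]_(m, p)) (x : 'cV[R]_m).
Variables (a0 : 'cV[R]_p) (J : {set 'I_p}) (lam mu : R).
Local Notation S := (selJ R J).
Local Notation DJ := (colsJ J D).
Local Notation G := (DJ^T *m DJ).
Local Notation sJ := (map_mx Num.sg (S^T *m a0)).
Local Notation ah := (alpha_hat J D x lam a0).
Local Notation e := (1 - #|J|%:R * mu).

Lemma residual_alpha_hatE :
  x - D *m ah = (1%:M - projJ J D) *m x + lam *: (DJ *m (invmx G *m sJ)).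
Proof.
rewrite /alpha_hat /projJ mulmxA -/(colsJ J D) !mulmxBr -!scalemxAr !mulmxA.
by rewrite mulmxBl mul1mx opprB addrA addrAC.
Qed.

Hypotheses (D_unit : forall j, dotc (col j D) (col j D) = 1)
  (D_coh : forall i j, i != j -> `|dotc (col i D) (col j D)| <= mu)
  (mu_ge0 : 0 <= mu) (kmu_le : #|J|%:R * mu <= 2^-1).

Lemma gram_colsJ_diag i : G i i = 1.
Proof. by rewrite gram_colsJE D_unit. Qed.

Lemma gram_colsJ_offdiag i i' : i != i' -> `|G i i'| <= mu.
Proof. by move=> ii'; rewrite gram_colsJE D_coh // (inj_eq enum_val_inj). Qed.

Let kmu_lt1 : #|J|%:R * mu < 1. Proof. by apply: le_lt_trans kmu_le _; lra. Qed.

Lemma gram_colsJ_unitmx : G \in unitmx.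
Proof.
exact: diag_dominant_unitmx gram_colsJ_diag gram_colsJ_offdiag mu_ge0 kmu_lt1.
Qed.

Lemma colsJ_corr_alpha_hat : DJ^T *m (x - D *m ah) = lam *: sJ.
Proof.
rewrite /alpha_hat mulmxBr (mulmxA D) -/(colsJ J D) (mulmxA DJ^T).
rewrite mulKVmx ?gram_colsJ_unitmx //.
by rewrite opprB addrC subrK.
Qed.

Hypotheses (a0_supp : forall j, j \notin J -> a0 j 0 = 0)
  (lam_gt0 : 0 < lam) (a0_ge : forall j, j \in J -> 9 / 4 * lam <= `|a0 j 0|)
  (corr_a0 : forall j, j \in J ->
     `|dotc (col j D) (x - D *m a0)| < lam * (2 - e^-1))
  (corr_proj : forall j, j \notin J ->
     `|dotc (col j D) ((1%:M - projJ J D) *m x)| < lam * (2 - e^-1)).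

Let e_gt0 : 0 < e. Proof. by rewrite subr_gt0. Qed.

Lemma alpha_hat_notin j : j \notin J -> ah j 0 = 0.
Proof. exact: selJ_mul_notin. Qed.

Lemma alpha_hat_near_a0 j : j \in J -> `|ah j 0 - a0 j 0| < `|a0 j 0|.
Proof.
move=> jJ; set w := S^T *m (ah - a0).
have supp_h k : k \notin J -> (ah - a0) k 0 = 0.
  by move=> kJ; rewrite [_ k 0]mxE [(- a0) k 0]mxE alpha_hat_notin // a0_supp // subrr.
have Gw : G *m w = DJ^T *m (x - D *m a0) - lam *: sJ.
  rewrite -colsJ_corr_alpha_hat -mulmxBr opprB addrC addrA subrK -mulmxBr.
  by rewrite -mulmxA /colsJ -(mulmxA D) selJ_mul_trmxK.
have Gw_lt k : `|(G *m w) k 0| < lam * (3 - e^-1).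
  rewrite Gw [X in `|X|]mxE [X in `|_ + X|]mxE [X in `|_ - X|]mxE.
  rewrite [X in `|_ - _ * X|]mxE.
  rewrite colsJ_trmx_mulE selJ_trmx_mulE.
  apply: le_lt_trans (ler_normB _ _) _.
  have sg_le : `|lam * Num.sg (a0 (enum_val k) 0)| <= lam.
    by rewrite normrM gtr0_norm // ler_piMr ?sgr_le1 // ltW.
  have := corr_a0 (enum_valP k); lra.
have := diag_dominant_ltr gram_colsJ_diag gram_colsJ_offdiag mu_ge0
  (ltW kmu_lt1) Gw_lt (enum_rank_in jJ j).
rewrite selJ_trmx_mulE enum_rankK_in // [X in _ * `|X|]mxE [X in _ * `|_ + X|]mxE.
move=> lt_h.
apply: lt_le_trans (a0_ge jJ).
have q_e : e^-1 * e = 1 by rewrite mulVf // gt_eqF.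
have : e^-1 * (e * `|ah j 0 - a0 j 0|) < e^-1 * (lam * (3 - e^-1)).
  by rewrite ltr_pM2l ?invr_gt0.
rewrite mulrA q_e mul1r => /lt_le_trans; apply.
exact/ler_mul3B/ltW.
Qed.

Lemma corr_alpha_hat_notin j : j \notin J -> `|lasso_corr D x ah j 0| < lam.
Proof.
move=> jJ; set g := invmx G *m sJ.
have g_le i : `|g i 0| <= e^-1.
  have e_g_le : e * `|g i 0| <= 1.
    apply: (diag_dominant_ler gram_colsJ_diag gram_colsJ_offdiag mu_ge0 (ltW kmu_lt1)).
    by move=> k; rewrite mulKVmx ?gram_colsJ_unitmx // mxE sgr_le1.
  by rewrite -(ler_pM2l e_gt0) mulfV ?lt0r_neq0.
have Dg_le : `|(D^T *m (DJ *m g)) j 0| <= #|J|%:R * mu * e^-1.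
  rewrite mulmxA mxE; apply: le_trans (ler_norm_sum _ _ _) _.
  apply: (@le_trans _ _ (\sum_(i < #|J|) mu * e^-1)); last first.
    by rewrite sumr_const card_ord mulr_natl mulrnAl.
  apply: ler_sum => i _; rewrite normrM; apply: ler_pM => //.
  have -> : (D^T *m DJ) j i = dotc (col j D) (col (enum_val i) D).
    by rewrite [LHS]mxE; apply: eq_bigr => r _; rewrite colsJE !mxE.
  by apply: D_coh; apply: contraNneq jJ => ->; exact: enum_valP.
have kmu_q : #|J|%:R * mu * e^-1 = e^-1 - 1.
  by rewrite -[X in X * _](subKr 1) mulrBl mul1r mulfV ?gt_eqF.
rewrite /lasso_corr residual_alpha_hatE mulmxDr -scalemxAr.
rewrite [X in `|X|]mxE [X in `|_ + X|]mxE -dotc_col.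
apply: le_lt_trans (ler_normD _ _) _.
have : `|lam * (D^T *m (DJ *m g)) j 0| <= lam * (e^-1 - 1).
  by rewrite normrM gtr0_norm // -kmu_q ler_pM2l.
have := corr_proj jJ; lra.
Qed.

Lemma corr_alpha_hat_in j : j \in J -> lasso_corr D x ah j 0 = lam * Num.sg (a0 j 0).
Proof.
move=> jJ; rewrite /lasso_corr -dotc_col.
have /matrixP/(_ (enum_rank_in jJ j) 0) := colsJ_corr_alpha_hat.
rewrite colsJ_trmx_mulE enum_rankK_in // => ->.
by rewrite [LHS]mxE [X in _ * X]mxE selJ_trmx_mulE enum_rankK_in.
Qed.

Theorem alpha_hat_lasso_unique : unique_minimizer (lasso_obj D x lam) ah.
Proof.
apply: lasso_certificate; [| | exact: gram_colsJ_unitmx] => j jJ.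
  rewrite corr_alpha_hat_in //; split.
    by rewrite -mulrA sgr_mul_eq_norm // alpha_hat_near_a0.
  by rewrite normrM gtr0_norm // ler_piMr ?sgr_le1 ?ltW.
by rewrite alpha_hat_notin // corr_alpha_hat_notin.
Qed.

End AlphaHat.

Section Curve.
Variables (R : realType) (m p : nat) (D0 W : 'M[R]_(m, p)) (v : 'cV[R]_p).

Lemma dotc_unit_le1 (u w : 'cV[R]_m) :
  dotc u u = 1 -> dotc w w = 1 -> `|dotc u w| <= 1.
Proof.
move=> uu ww.
have sq_ge0 (s : R) : 0 <= \sum_i (u i 0 + s * w i 0) ^+ 2.
  by apply: sumr_ge0 => i _; exact: sqr_ge0.
have expand (s : R) :
    \sum_i (u i 0 + s * w i 0) ^+ 2 = dotc u u + 2 * s * dotc u w + s ^+ 2 * dotc w w.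
  by rewrite /dotc !mulr_sumr -!big_split /=; apply: eq_bigr => i _; ring.
have := sq_ge0 1; have := sq_ge0 (-1); rewrite !expand uu ww.
rewrite ler_norml; lra.
Qed.

Lemma mu0_ge0 : 0 <= mu0 D0.
Proof. exact: bigmax_ge_id. Qed.

Lemma dotc_le_mu0 i j : i != j -> `|dotc (col i D0) (col j D0)| <= mu0 D0.
Proof. by move=> ij; apply: le_trans (le_bigmax _ _ i); exact: le_bigmax_cond. Qed.

Lemma on_sphere_le1 j : on_sphere v -> `|v j 0| <= 1.
Proof.
move=> v1; have sq_le1 : v j 0 ^+ 2 <= 1.
  rewrite -v1 /sqnorm2 (bigD1 j) //= lerDl.
  by apply: sumr_ge0 => i _; exact: sqr_ge0.
by rewrite ler_norml; apply/andP; split; nra.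
Qed.

Lemma dotc_Dcurve (t : R) i j :
  dotc (col i (Dcurve D0 W v t)) (col j (Dcurve D0 W v t)) =
    cos (v i 0 * t) * cos (v j 0 * t) * dotc (col i D0) (col j D0)
  + cos (v i 0 * t) * sin (v j 0 * t) * dotc (col i D0) (col j W)
  + sin (v i 0 * t) * cos (v j 0 * t) * dotc (col i W) (col j D0)
  + sin (v i 0 * t) * sin (v j 0 * t) * dotc (col i W) (col j W).
Proof.
rewrite /dotc !mulr_sumr -!big_split /=; apply: eq_bigr => r _.
by rewrite !mxE; ring.
Qed.

Hypotheses (D0_unit : unit_cols D0) (W_in : in_W D0 W).

Let D0_dotc_unit j : dotc (col j D0) (col j D0) = 1.
Proof. by rewrite -(D0_unit j); apply: eq_bigr => i _; rewrite expr2. Qed.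

Lemma Dcurve_dotc_unit (t : R) j :
  dotc (col j (Dcurve D0 W v t)) (col j (Dcurve D0 W v t)) = 1.
Proof.
have [W_D0 W_unit] := W_in.
rewrite dotc_Dcurve D0_dotc_unit W_unit W_D0 dotcC W_D0 !mulr0 !addr0 !mulr1.
by rewrite -!expr2 cos2Dsin2.
Qed.

Lemma Dcurve_coherence (t : R) i j : on_sphere v -> 0 <= t -> i != j ->
  `|dotc (col i (Dcurve D0 W v t)) (col j (Dcurve D0 W v t))| <= mu D0 t.
Proof.
move=> v1 t_ge0 ij; have [_ W_unit] := W_in.
have sin_le k : `|sin (v k 0 * t)| <= t.
  apply: le_trans (abs_sin_le _) _.
  by rewrite normrM (ger0_norm t_ge0) ler_piMl // on_sphere_le1.
have WD0_le k l : `|dotc (col k W) (col l D0)| <= 1 := dotc_unit_le1 (W_unit k) (D0_dotc_unit l).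
have D0W_le k l : `|dotc (col k D0) (col l W)| <= 1 := dotc_unit_le1 (D0_dotc_unit k) (W_unit l).
have WW_le k l : `|dotc (col k W) (col l W)| <= 1 := dotc_unit_le1 (W_unit k) (W_unit l).
have t1 := normrM3_le (cos_max (v i 0 * t)) (cos_max (v j 0 * t)) (dotc_le_mu0 ij).
have t2 := normrM3_le (cos_max (v i 0 * t)) (sin_le j) (D0W_le i j).
have t3 := normrM3_le (sin_le i) (cos_max (v j 0 * t)) (WD0_le i j).
have t4 := normrM3_le (sin_le i) (sin_max (v j 0 * t)) (WW_le i j).
rewrite !mul1r !mulr1 in t1 t2 t3 t4.
rewrite dotc_Dcurve /mu.
apply: le_trans (ler_normD _ _) _.
apply: le_trans (lerD (ler_normD _ _) t4) _.
apply: le_trans (lerD (lerD (ler_normD _ _) t3) (lexx _)) _.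
lra.
Qed.

End Curve.

Lemma Qt_sqr (R : realType) m p (D0 : 'M[R]_(m, p)) k t :
  k%:R * mu D0 t < 1 -> Qt D0 k t ^+ 2 = (1 - k%:R * mu D0 t)^-1.
Proof. by move=> kmu; rewrite /Qt expr_div_n expr1n sqr_sqrtr ?div1r // subr_ge0 ltW. Qed.

Theorem corollary3 (R : realType) (m p : nat)
  (D0 W : 'M[R]_(m, p)) (v : 'cV[R]_p) (x : 'cV[R]_m) (a0 : 'cV[R]_p)
  (J : {set 'I_p}) (k : nat) (t t' lam abar : R) :
  unit_cols D0 ->
  in_W D0 W ->
  on_sphere v ->
  J = [set j | a0 j 0 != 0] ->
  #|J| = k ->
  k%:R * mu D0 t <= 2^-1 ->
  0 <= t' -> t' <= t ->
  0 < lam ->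
  9 / 4 * lam <= abar ->
  (forall j, j \in J -> abar <= `|a0 j 0|) ->
  (forall j, j \in J ->
     `|dotc (col j (Dcurve D0 W v t')) (x - Dcurve D0 W v t' *m a0)|
       < lam * (2 - Qt D0 k t ^+ 2)) ->
  (forall j, j \notin J ->
     `|dotc (col j (Dcurve D0 W v t')) ((1%:M - projJ J (Dcurve D0 W v t')) *m x)|
       < lam * (2 - Qt D0 k t ^+ 2)) ->
  unique_minimizer (lasso_obj (Dcurve D0 W v t') x lam)
    (alpha_hat J (Dcurve D0 W v t') x lam a0).
Proof.
move=> D0_unit W_in v1 J_supp <- kmu t'_ge0 t'_le lam_gt0 abar_ge a0_ge corr_a0 corr_proj.
have mu_ge0 : 0 <= mu D0 t by rewrite /mu; have := mu0_ge0 D0; lra.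
rewrite Qt_sqr in corr_a0 corr_proj; last by apply: le_lt_trans kmu _; lra.
apply: (alpha_hat_lasso_unique (mu := mu D0 t)) => //.
- exact: Dcurve_dotc_unit.
- move=> i j ij; apply: le_trans (Dcurve_coherence D0_unit W_in v1 t'_ge0 ij) _.
  by rewrite /mu; lra.
- by move=> j; rewrite J_supp inE negbK => /eqP.
- by move=> j /a0_ge; apply: le_trans.
Qed.
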